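(* Let $\epsilon\in\{1,-1\}$ and $j\ge1$. In each of the following three hierarchies (defined in the context), the $j$-th flow $q_{t_j}=F_j[q,r]$, $r_{t_j}=G_j[q,r]$ admits the constraint $r=\epsilon\bar q$, in the sense that for every smooth $q:\mathbb{R}^2\to\mathbb{C}$, $$G_j[q,\epsilon\bar q]=\epsilon\,\overline{F_j[q,\epsilon\bar q]},$$ so the constraint is preserved by the flow and the system reduces to the single equation $q_{t_j}=F_j[q,\epsilon\bar q]$: (1) the Kaup–Newell hierarchy; (2) the type II hierarchy; (3) the $\mathcal{B}$-twisted hierarchy with parameter $\alpha$, where $\alpha$ is purely imaginary ($\mathrm{Re}\,\alpha=0$).
   Context: Let $a=\mathrm{diag}(i,-i)$. For smooth complex-valued functions $q(x,t)$, $r(x,t)$ set $u=\begin{pmatrix}0&q\\ r&0\end{pmatrix}$. Consider formal series $Q=\sum_{k\le 2}Q_k\lambda^k$ in a formal parameter $\lambda$, whose coefficients $Q_k$ are traceless $2\times2$ matrices of smooth functions of $(x,t)$, with $Q_k$ diagonal for $k$ even and off-diagonal for $k$ odd. For a diagonal traceless matrix function $P$ (possibly $0$), let $Q^{P}$ denote the unique such series with $Q_2=a$, $Q_1=u$, satisfying $[\partial_x+a\lambda^2+u\lambda+P,\;Q]=0$ (i.e. $\partial_xQ+[a\lambda^2+u\lambda+P,Q]=0$ coefficientwise) and $Q^2=-\lambda^4 I$; its coefficients are differential polynomials in $q,r$. (1) Kaup–Newell hierarchy: with $Q=Q^{0}$, the $j$-th flow is $u_{t_j}=\partial_xQ_{3-2j}$.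 (2) Type II hierarchy: with $P_0=\frac{i}{2}\mathrm{diag}(qr,-qr)$ and $Q=Q^{P_0}$, the $j$-th flow is $u_{t_j}=\partial_xQ_{3-2j}+[P_0,Q_{3-2j}]+[u,Q_{2-2j}]$. (3) $\mathcal{B}$-twisted hierarchy with parameter $\alpha\in\mathbb{C}$: with $P_0^{\alpha}=-\alpha\,\mathrm{diag}(qr,-qr)$ and $Q=Q^{P_0^\alpha}$, the $j$-th flow is $u_{t_j}=\partial_xQ_{3-2j}+[P_0^\alpha,Q_{3-2j}]+[u,Q_{2-2j}-\mathcal{B}(Q_{2-2j})]$, where $\mathcal{B}(A)=(1-2\alpha i)A$ for diagonal $A$ (so the last term equals $2\alpha i[u,Q_{2-2j}]$). In each case the right-hand side is off-diagonal, of the form $\begin{pmatrix}0&F_j[q,r]\\ G_j[q,r]&0\end{pmatrix}$ with $F_j,G_j$ differential polynomials in $q,r$, and the flow is the system $q_{t_j}=F_j[q,r]$, $r_{t_j}=G_j[q,r]$. (For $j=2$: (1) gives $q_t=\frac12(iq_{xx}+(q^2r)_x)$, $r_t=\frac12(-ir_{xx}+(qr^2)_x)$.) *)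

From Stdlib Require Import Reals List Arith ClassicalEpsilon.
Open Scope R_scope.

Definition CC := (R * R)%type.
Definition Cofr (a : R) : CC := (a, 0).
Definition C0 : CC := (0, 0).
Definition C1 : CC := (1, 0).
Definition Ci : CC := (0, 1).
Definition Cadd (z w : CC) : CC := (fst z + fst w, snd z + snd w).
Definition Copp (z : CC) : CC := (- fst z, - snd z).
Definition Cmul (z w : CC) : CC :=
  (fst z * fst w - snd z * snd w, fst z * snd w + snd z * fst w).
Definition Cconj (z : CC) : CC := (fst z, - snd z).

Definition Fn := R -> R -> CC.
Definition fconst (c : CC) : Fn := fun _ _ => c.
Definition fzero : Fn := fconst C0.
Definition fadd (f g : Fn) : Fn := fun x t => Cadd (f x t) (g x t).
Definition fopp (f : Fn) : Fn := fun x t => Copp (f x t).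
Definition fmul (f g : Fn) : Fn := fun x t => Cmul (f x t) (g x t).
Definition fconj (f : Fn) : Fn := fun x t => Cconj (f x t).
Definition fscal (c : CC) (f : Fn) : Fn := fmul (fconst c) f.

(** Derivative of a real function at a point (the value l with
    derivable_pt_lim g x l; meaningful whenever g is differentiable at x). *)
Definition pderiv (g : R -> R) (x : R) : R :=
  epsilon (inhabits 0) (fun l => derivable_pt_lim g x l).

Definition Dx (f : Fn) : Fn := fun x t =>
  (pderiv (fun y => fst (f y t)) x, pderiv (fun y => snd (f y t)) x).
Definition Dt (f : Fn) : Fn := fun x t =>
  (pderiv (fun s => fst (f x s)) t, pderiv (fun s => snd (f x s)) t).

Definition derivable_x (f : Fn) (x t : R) : Prop :=
  exists l1 l2, derivable_pt_lim (fun y => fst (f y t)) x l1 /\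
                derivable_pt_lim (fun y => snd (f y t)) x l2.
Definition derivable_t (f : Fn) (x t : R) : Prop :=
  exists l1 l2, derivable_pt_lim (fun s => fst (f x s)) t l1 /\
                derivable_pt_lim (fun s => snd (f x s)) t l2.
Definition continuous2 (f : Fn) : Prop :=
  forall x t eps, 0 < eps -> exists delta, 0 < delta /\
    forall x' t', Rabs (x' - x) < delta -> Rabs (t' - t) < delta ->
      Rabs (fst (f x' t') - fst (f x t)) < eps /\
      Rabs (snd (f x' t') - snd (f x t)) < eps.

Definition iterD (w : list bool) (f : Fn) : Fn :=
  fold_right (fun (b : bool) g => if b then Dx g else Dt g) f w.

Definition smooth (f : Fn) : Prop :=
  forall w : list bool,
    (forall x t, derivable_x (iterD w f) x t) /\
    (forall x t, derivable_t (iterD w f) x t) /\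
    continuous2 (iterD w f).

Record M2 := mkM2 { m11 : Fn; m12 : Fn; m21 : Fn; m22 : Fn }.
Definition M0 : M2 := mkM2 fzero fzero fzero fzero.
Definition MI : M2 := mkM2 (fconst C1) fzero fzero (fconst C1).
Definition Mdiag (d1 d2 : Fn) : M2 := mkM2 d1 fzero fzero d2.
Definition Moff (b c : Fn) : M2 := mkM2 fzero b c fzero.
Definition Madd (A B : M2) : M2 :=
  mkM2 (fadd (m11 A) (m11 B)) (fadd (m12 A) (m12 B))
       (fadd (m21 A) (m21 B)) (fadd (m22 A) (m22 B)).
Definition Mopp (A : M2) : M2 :=
  mkM2 (fopp (m11 A)) (fopp (m12 A)) (fopp (m21 A)) (fopp (m22 A)).
Definition Msub (A B : M2) : M2 := Madd A (Mopp B).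
Definition Mmul (A B : M2) : M2 :=
  mkM2 (fadd (fmul (m11 A) (m11 B)) (fmul (m12 A) (m21 B)))
       (fadd (fmul (m11 A) (m12 B)) (fmul (m12 A) (m22 B)))
       (fadd (fmul (m21 A) (m11 B)) (fmul (m22 A) (m21 B)))
       (fadd (fmul (m21 A) (m12 B)) (fmul (m22 A) (m22 B))).
Definition Mcomm (A B : M2) : M2 := Msub (Mmul A B) (Mmul B A).
Definition MDx (A : M2) : M2 := mkM2 (Dx (m11 A)) (Dx (m12 A)) (Dx (m21 A)) (Dx (m22 A)).
Definition Mscal (c : CC) (A : M2) : M2 :=
  mkM2 (fscal c (m11 A)) (fscal c (m12 A)) (fscal c (m21 A)) (fscal c (m22 A)).

Definition is_diag (A : M2) : Prop := m12 A = fzero /\ m21 A = fzero.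
Definition is_offdiag (A : M2) : Prop := m11 A = fzero /\ m22 A = fzero.
Definition traceless (A : M2) : Prop := fadd (m11 A) (m22 A) = fzero.
Definition M_smooth (A : M2) : Prop :=
  smooth (m11 A) /\ smooth (m12 A) /\ smooth (m21 A) /\ smooth (m22 A).

Definition a_mat : M2 := Mdiag (fconst Ci) (fconst (Copp Ci)).
Definition u_mat (q r : Fn) : M2 := Moff q r.

(** A formal series Q = sum_{k <= 2} Q_k lambda^k is encoded as a sequence
    Qs : nat -> M2 with  Qs n = Q_{2-n}.  *)

(** Coefficient of lambda^(4-n) in Q^2:  sum_{i=0}^{n} Qs i * Qs (n-i). *)
Definition sq_coef (Qs : nat -> M2) (n : nat) : M2 :=
  fold_right (fun i acc => Madd (Mmul (Qs i) (Qs (n - i)%nat)) acc) M0 (seq 0 (S n)).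

(** Qs is the series Q^P (for u = u_mat q r and diagonal traceless P):
    Q_2 = a, Q_1 = u, coefficients traceless smooth, Q_k diagonal for k even and
    off-diagonal for k odd, [d_x + a lambda^2 + u lambda + P, Q] = 0
    coefficientwise (coefficient of lambda^(2-n) is
    d_x Q_{2-n} + [a, Q_{-n}] + [u, Q_{1-n}] + [P, Q_{2-n}]; the coefficients of
    lambda^3, lambda^4 vanish identically), and Q^2 = -lambda^4 I. *)
Definition is_Q (q r : Fn) (P : M2) (Qs : nat -> M2) : Prop :=
  Qs 0%nat = a_mat /\ Qs 1%nat = u_mat q r /\
  (forall n : nat, traceless (Qs n) /\ M_smooth (Qs n) /\
     (Nat.Even n -> is_diag (Qs n)) /\ (Nat.Odd n -> is_offdiag (Qs n))) /\
  (forall n : nat,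
     Madd (Madd (Madd (MDx (Qs n)) (Mcomm a_mat (Qs (n + 2)%nat)))
                (Mcomm (u_mat q r) (Qs (n + 1)%nat)))
          (Mcomm P (Qs n)) = M0) /\
  (forall n : nat, sq_coef Qs n = if Nat.eqb n 0 then Mopp MI else M0).

(** Q_{3-2j} = Qs (2j-1), Q_{2-2j} = Qs (2j). *)

Definition rhs_KN (Qs : nat -> M2) (j : nat) : M2 := MDx (Qs (2 * j - 1)%nat).

Definition P0_II (q r : Fn) : M2 :=
  Mdiag (fscal (0, / 2) (fmul q r)) (fopp (fscal (0, / 2) (fmul q r))).
Definition rhs_II (q r : Fn) (Qs : nat -> M2) (j : nat) : M2 :=
  Madd (Madd (MDx (Qs (2 * j - 1)%nat)) (Mcomm (P0_II q r) (Qs (2 * j - 1)%nat)))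
       (Mcomm (u_mat q r) (Qs (2 * j)%nat)).

(** (3) B-twisted: P_0^alpha = -alpha diag(qr, -qr), B(A) = (1 - 2 alpha i) A
    on diagonal A (it is only applied to the diagonal Q_{2-2j}). *)
Definition P0_B (alpha : CC) (q r : Fn) : M2 :=
  Mdiag (fscal (Copp alpha) (fmul q r)) (fopp (fscal (Copp alpha) (fmul q r))).
Definition B_op (alpha : CC) (A : M2) : M2 :=
  Mscal (Cadd C1 (Copp (Cmul (Cofr 2) (Cmul alpha Ci)))) A.
Definition rhs_B (alpha : CC) (q r : Fn) (Qs : nat -> M2) (j : nat) : M2 :=
  Madd (Madd (MDx (Qs (2 * j - 1)%nat)) (Mcomm (P0_B alpha q r) (Qs (2 * j - 1)%nat)))
       (Mcomm (u_mat q r) (Msub (Qs (2 * j)%nat) (B_op alpha (Qs (2 * j)%nat)))).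

Definition admits_constraint (eps : R) (M : M2) : Prop :=
  forall x t, m21 M x t = Cmul (Cofr eps) (Cconj (m12 M x t)).

From Pilot Require Import Defs.
From Stdlib Require Import Reals List Arith ClassicalEpsilon.
From Stdlib Require Import FunctionalExtensionality Lra Lia.
Open Scope R_scope.

(* For real eps the matrices [[z, w], [eps conj w, conj z]] form a real algebra
   closed under d/dx.  Under r = eps conj q it contains a, u and the gauge
   terms P; and the coefficients of Q^P are obtained from lower ones by
   inverting X |-> [a, X] on the off-diagonal part and X |-> a X + X a on the
   diagonal part (both multiply entries by +-2i), operations that preserve
   this class.  Hence all Q_k, and therefore every flow, lie in it, which is
   the constraint G = eps conj F. *)

Definition eps_conj_sym (eps : R) (A : M2) : Prop := forall x t,
  m22 A x t = Cconj (m11 A x t) /\ m21 A x t = Cmul (Cofr eps) (Cconj (m12 A x t)).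

Lemma CC_eq (z w : CC) : fst z = fst w -> snd z = snd w -> z = w.
Proof. destruct z, w; simpl; intros; subst; reflexivity. Qed.

Ltac CC_ring :=
  unfold Cadd, Cmul, Cconj, Cofr, Copp, C0, C1, Ci in *; simpl in *;
  repeat split; try (apply CC_eq; simpl; ring).

Lemma M2_ext (A B : M2) :
  (forall x t, m11 A x t = m11 B x t) -> (forall x t, m12 A x t = m12 B x t) ->
  (forall x t, m21 A x t = m21 B x t) -> (forall x t, m22 A x t = m22 B x t) ->
  A = B.
Proof.
  destruct A, B; simpl; intros H1 H2 H3 H4.
  f_equal; do 2 (apply functional_extensionality; intro); auto.
Qed.

Ltac M2_ring := apply M2_ext; intros; simpl; unfold fadd, fzero, fconst; CC_ring.

Section Closure.

Variable eps : R.

Lemma eps_conj_sym_M0 : eps_conj_sym eps M0.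
Proof. intros x t; simpl; unfold fzero, fconst; CC_ring. Qed.

Lemma eps_conj_sym_add A B :
  eps_conj_sym eps A -> eps_conj_sym eps B -> eps_conj_sym eps (Madd A B).
Proof.
  intros HA HB x t; destruct (HA x t) as [A1 A2], (HB x t) as [B1 B2].
  simpl; unfold fadd; rewrite A1, A2, B1, B2; CC_ring.
Qed.

Lemma eps_conj_sym_opp A : eps_conj_sym eps A -> eps_conj_sym eps (Mopp A).
Proof.
  intros HA x t; destruct (HA x t) as [A1 A2].
  simpl; unfold fopp; rewrite A1, A2; CC_ring.
Qed.

Lemma eps_conj_sym_sub A B :
  eps_conj_sym eps A -> eps_conj_sym eps B -> eps_conj_sym eps (Msub A B).
Proof. intros; apply eps_conj_sym_add, eps_conj_sym_opp; assumption. Qed.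

Lemma eps_conj_sym_mul A B :
  eps_conj_sym eps A -> eps_conj_sym eps B -> eps_conj_sym eps (Mmul A B).
Proof.
  intros HA HB x t; destruct (HA x t) as [A1 A2], (HB x t) as [B1 B2].
  simpl; unfold fadd, fmul; rewrite A1, A2, B1, B2; CC_ring.
Qed.

Lemma eps_conj_sym_comm A B :
  eps_conj_sym eps A -> eps_conj_sym eps B -> eps_conj_sym eps (Mcomm A B).
Proof. intros; apply eps_conj_sym_sub; apply eps_conj_sym_mul; assumption. Qed.

Lemma eps_conj_sym_scal_real c A :
  snd c = 0 -> eps_conj_sym eps A -> eps_conj_sym eps (Mscal c A).
Proof.
  destruct c as [c1 c2]; simpl; intros -> HA x t; destruct (HA x t) as [A1 A2].
  simpl; unfold fscal, fmul, fconst; rewrite A1, A2; CC_ring.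
Qed.

Lemma eps_conj_sym_sum (G : nat -> M2) l :
  (forall i, In i l -> eps_conj_sym eps (G i)) ->
  eps_conj_sym eps (fold_right (fun i acc => Madd (G i) acc) M0 l).
Proof.
  induction l as [|i l IH]; simpl; intros H.
  - apply eps_conj_sym_M0.
  - apply eps_conj_sym_add; auto.
Qed.

Lemma eps_conj_sym_a : eps_conj_sym eps a_mat.
Proof. intros x t; simpl; unfold fzero, fconst; CC_ring. Qed.

Lemma eps_conj_sym_u q : eps_conj_sym eps (u_mat q (fscal (Cofr eps) (fconj q))).
Proof. intros x t; simpl; unfold fzero, fconst, fscal, fmul, fconj; CC_ring. Qed.

Lemma eps_conj_sym_diag_imag (c : CC) (f : Fn) :
  fst c = 0 -> (forall x t, snd (f x t) = 0) ->
  eps_conj_sym eps (Mdiag (fscal c f) (fopp (fscal c f))).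
Proof.
  destruct c as [c1 c2]; simpl; intros -> Hf x t.
  simpl; unfold fzero, fconst, fscal, fmul, fopp.
  destruct (f x t) as [f1 f2] eqn:E; simpl in *; specialize (Hf x t);
    rewrite E in Hf; simpl in Hf; subst; CC_ring.
Qed.

Lemma fmul_conj_real (q : Fn) x t :
  snd (fmul q (fscal (Cofr eps) (fconj q)) x t) = 0.
Proof.
  unfold fmul, fscal, fconj, fconst; CC_ring; destruct (q x t); simpl; ring.
Qed.

End Closure.

Lemma pderiv_eq g x l : derivable_pt_lim g x l -> pderiv g x = l.
Proof.
  intro H; unfold pderiv.
  apply (uniqueness_limite g x); [apply epsilon_spec; exists l |]; exact H.
Qed.

Lemma pderiv_scal_ext (g h : R -> R) c x :
  (exists l, derivable_pt_lim g x l) -> (forall y, h y = c * g y) ->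
  pderiv h x = c * pderiv g x.
Proof.
  intros [l H] Hh.
  replace h with (fun y => c * g y) by (apply functional_extensionality; auto).
  rewrite (pderiv_eq _ _ _ H).
  exact (pderiv_eq _ _ _ (derivable_pt_lim_scal g c x l H)).
Qed.

Lemma smooth_derivable_x f : smooth f -> forall x t, derivable_x f x t.
Proof. intro H; exact (proj1 (H nil)). Qed.

Lemma eps_conj_sym_Dx eps A :
  (forall x t, derivable_x (m11 A) x t) -> (forall x t, derivable_x (m12 A) x t) ->
  eps_conj_sym eps A -> eps_conj_sym eps (MDx A).
Proof.
  intros D1 D2 HA x t; simpl; unfold Defs.Dx.
  destruct (D1 x t) as [l1 [l2 [H1 H2]]], (D2 x t) as [l3 [l4 [H3 H4]]].
  rewrite (pderiv_scal_ext (fun y => fst (m11 A y t)) (fun y => fst (m22 A y t)) 1),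
          (pderiv_scal_ext (fun y => snd (m11 A y t)) (fun y => snd (m22 A y t)) (-1)),
          (pderiv_scal_ext (fun y => fst (m12 A y t)) (fun y => fst (m21 A y t)) eps),
          (pderiv_scal_ext (fun y => snd (m12 A y t)) (fun y => snd (m21 A y t)) (- eps));
    try (eexists; eassumption);
    try (intro y; destruct (HA y t) as [E22 E21]; rewrite ?E22, ?E21; CC_ring; ring).
  CC_ring.
Qed.

Lemma smooth_M_derivable A :
  M_smooth A ->
  (forall x t, derivable_x (m11 A) x t) /\ (forall x t, derivable_x (m12 A) x t).
Proof. intros [H11 [H12 _]]; split; apply smooth_derivable_x; assumption. Qed.

Lemma offdiag_of_comm_a eps X T :
  eps_conj_sym eps T -> Madd (Mcomm a_mat X) T = M0 ->
  forall x t, m21 X x t = Cmul (Cofr eps) (Cconj (m12 X x t)).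
Proof.
  intros HT H x t.
  assert (H12 := f_equal (fun M => m12 M x t) H).
  assert (H21 := f_equal (fun M => m21 M x t) H).
  destruct (HT x t) as [_ T21].
  simpl in H12, H21; unfold fadd, fmul, fopp, fconst, fzero in H12, H21.
  rewrite T21 in H21.
  destruct (m11 X x t), (m12 X x t), (m21 X x t), (m22 X x t), (m12 T x t).
  unfold Cadd, Cmul, Cconj, Cofr, Copp, C0, Ci in *; simpl in *.
  injection H12; injection H21; intros.
  apply CC_eq; simpl; nra.
Qed.

Lemma diag_of_anticomm_a eps X T :
  eps_conj_sym eps T -> Madd (Madd (Mmul a_mat X) (Mmul X a_mat)) T = M0 ->
  forall x t, m22 X x t = Cconj (m11 X x t).
Proof.
  intros HT H x t.
  assert (H11 := f_equal (fun M => m11 M x t) H).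
  assert (H22 := f_equal (fun M => m22 M x t) H).
  destruct (HT x t) as [T22 _].
  simpl in H11, H22; unfold fadd, fmul, fconst, fzero in H11, H22.
  rewrite T22 in H22.
  destruct (m11 X x t), (m12 X x t), (m21 X x t), (m22 X x t), (m11 T x t).
  unfold Cadd, Cmul, Cconj, Copp, C0, Ci in *; simpl in *.
  injection H11; injection H22; intros.
  apply CC_eq; simpl; lra.
Qed.

Lemma fold_Madd_acc (G : nat -> M2) acc l :
  fold_right (fun i a => Madd (G i) a) acc l =
  Madd (fold_right (fun i a => Madd (G i) a) M0 l) acc.
Proof.
  induction l as [|i l IH]; simpl; [M2_ring |].
  rewrite IH; M2_ring.
Qed.

(* The coefficient of lambda^(2-m) in Q^2 isolates the new coefficient Q_{-m}
   (index m+2) in an anticommutator with Q_2 = a. *)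
Lemma sq_coef_SS (Qs : nat -> M2) m :
  sq_coef Qs (S (S m)) =
  Madd (Madd (Mmul (Qs 0%nat) (Qs (S (S m)))) (Mmul (Qs (S (S m))) (Qs 0%nat)))
       (fold_right (fun i acc => Madd (Mmul (Qs i) (Qs (S (S m) - i)%nat)) acc) M0
                   (seq 1 (S m))).
Proof.
  unfold sq_coef.
  replace (seq 0 (S (S (S m)))) with (0%nat :: seq 1 (S m) ++ S (S m) :: nil)
    by (rewrite <- seq_S; reflexivity).
  simpl fold_right; rewrite fold_right_app; simpl fold_right.
  rewrite fold_Madd_acc, Nat.sub_diag; M2_ring.
Qed.

Lemma Madd_swap12 A B C D : Madd (Madd (Madd A B) C) D = Madd B (Madd (Madd A C) D).
Proof. M2_ring. Qed.

Lemma is_Q_eps_conj_sym eps q P Qs :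
  eps_conj_sym eps P -> is_Q q (fscal (Cofr eps) (fconj q)) P Qs ->
  forall n, eps_conj_sym eps (Qs n).
Proof.
  intros HP [HQ0 [HQ1 [Hreg [Hlax Hsq]]]].
  set (u := u_mat q (fscal (Cofr eps) (fconj q))) in Hlax.
  intro n; induction n as [n IH] using lt_wf_ind.
  destruct n as [|[|m]]; [rewrite HQ0; apply eps_conj_sym_a
                        | rewrite HQ1; apply eps_conj_sym_u |].
  destruct (smooth_M_derivable _ (proj1 (proj2 (Hreg m)))) as [D11 D12].
  assert (Hm : eps_conj_sym eps
                 (Madd (Madd (MDx (Qs m)) (Mcomm u (Qs (m + 1)%nat))) (Mcomm P (Qs m)))).
  { apply eps_conj_sym_add; [apply eps_conj_sym_add |].
    - apply eps_conj_sym_Dx; auto; apply IH; lia.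
    - apply eps_conj_sym_comm; [apply eps_conj_sym_u | apply IH; lia].
    - apply eps_conj_sym_comm; [exact HP | apply IH; lia]. }
  assert (Hmid : eps_conj_sym eps
                   (fold_right (fun i acc => Madd (Mmul (Qs i) (Qs (S (S m) - i)%nat)) acc)
                               M0 (seq 1 (S m)))).
  { apply eps_conj_sym_sum; intros i Hi; apply in_seq in Hi.
    apply eps_conj_sym_mul; apply IH; lia. }
  assert (Hcomm := Hlax m); rewrite Madd_swap12 in Hcomm.
  replace (m + 2)%nat with (S (S m)) in Hcomm by lia.
  assert (Hanti := Hsq (S (S m))); simpl Nat.eqb in Hanti.
  rewrite sq_coef_SS, HQ0 in Hanti.
  intros x t; split.
  - exact (diag_of_anticomm_a eps _ _ Hmid Hanti x t).
  - exact (offdiag_of_comm_a eps _ _ Hm Hcomm x t).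
Qed.

Lemma is_Q_eps_conj_sym_Dx eps q P Qs :
  eps_conj_sym eps P -> is_Q q (fscal (Cofr eps) (fconj q)) P Qs ->
  forall n, eps_conj_sym eps (MDx (Qs n)).
Proof.
  intros HP HQ n.
  assert (Hreg := proj1 (proj2 (proj2 HQ))).
  destruct (smooth_M_derivable _ (proj1 (proj2 (Hreg n)))) as [D11 D12].
  apply eps_conj_sym_Dx; auto.
  exact (is_Q_eps_conj_sym eps q P Qs HP HQ n).
Qed.

Lemma flow_eps_conj_sym eps q P Qs W n :
  eps_conj_sym eps P -> is_Q q (fscal (Cofr eps) (fconj q)) P Qs ->
  eps_conj_sym eps W ->
  eps_conj_sym eps (Madd (Madd (MDx (Qs n)) (Mcomm P (Qs n))) W).
Proof.
  intros HP HQ HW.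
  apply eps_conj_sym_add; [apply eps_conj_sym_add |]; auto.
  - exact (is_Q_eps_conj_sym_Dx eps q P Qs HP HQ n).
  - exact (eps_conj_sym_comm eps _ _ HP (is_Q_eps_conj_sym eps q P Qs HP HQ n)).
Qed.

Lemma eps_conj_sym_admits_constraint eps M :
  eps_conj_sym eps M -> admits_constraint eps M.
Proof. intros H x t; exact (proj2 (H x t)). Qed.

Theorem theorem4p1 :
  forall (eps : R) (j : nat) (q : Fn),
    (eps = 1 \/ eps = -1) -> (1 <= j)%nat -> smooth q ->
    let r := fscal (Cofr eps) (fconj q) in
    (forall Qs, is_Q q r M0 Qs -> admits_constraint eps (rhs_KN Qs j)) /\
    (forall Qs, is_Q q r (P0_II q r) Qs -> admits_constraint eps (rhs_II q r Qs j)) /\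
    (forall alpha : CC, fst alpha = 0 ->
       forall Qs, is_Q q r (P0_B alpha q r) Qs ->
         admits_constraint eps (rhs_B alpha q r Qs j)).
Proof.
  intros eps j q _ _ _ r.
  split; [| split].
  - intros Qs HQ; apply eps_conj_sym_admits_constraint.
    exact (is_Q_eps_conj_sym_Dx eps q M0 Qs (eps_conj_sym_M0 eps) HQ _).
  - intros Qs HQ; apply eps_conj_sym_admits_constraint.
    assert (HP : eps_conj_sym eps (P0_II q r))
      by (apply eps_conj_sym_diag_imag; [reflexivity | apply fmul_conj_real]).
    apply (flow_eps_conj_sym _ _ _ _ _ _ HP HQ), eps_conj_sym_comm;
      [apply eps_conj_sym_u | exact (is_Q_eps_conj_sym eps q _ Qs HP HQ _)].
  - intros alpha Halpha Qs HQ; apply eps_conj_sym_admits_constraint.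
    assert (HP : eps_conj_sym eps (P0_B alpha q r))
      by (apply eps_conj_sym_diag_imag; [simpl; rewrite Halpha; ring
                                         | apply fmul_conj_real]).
    assert (HQ2j := is_Q_eps_conj_sym eps q _ Qs HP HQ (2 * j)).
    apply (flow_eps_conj_sym _ _ _ _ _ _ HP HQ), eps_conj_sym_comm;
      [apply eps_conj_sym_u |].
    apply eps_conj_sym_sub, eps_conj_sym_scal_real; auto.
    destruct alpha as [a1 a2]; simpl in *; subst; ring.
Qed.
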